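(* Every quasi-normal operator $T\in\mathcal{L}(\mathcal{H})$ with closed range is an SD operator.
   Context: $\mathcal{H}$ is a Hilbert space, $\mathcal{L}(\mathcal{H})$ the bounded operators on it. $T$ is quasi-normal if $T$ commutes with $T^*T$. For $T$ with closed range, $T^\dagger$ is its Moore–Penrose inverse (unique solution of $TT^\dagger T=T$, $T^\dagger TT^\dagger=T^\dagger$, $(T^\dagger T)^*=T^\dagger T$, $(TT^\dagger)^*=TT^\dagger$). $T$ is SD if it has closed range and $T^*T^\dagger=T^\dagger T^*$. *)

From mathcomp Require Import all_boot all_order all_algebra.
From mathcomp Require Import reals.
From mathcomp.real_closed Require Import complex.
Set Implicit Arguments. Unset Strict Implicit. Unset Printing Implicit Defensive.
Import Order.TTheory GRing.Theory Num.Theory.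
Local Open Scope ring_scope.

Section Hilbert.
Variables (R : realType) (V : lmodType R[i]) (ip : V -> V -> R[i]).

Definition hnorm (x : V) : R[i] := sqrtC (ip x x).

Definition hconverges (u : nat -> V) (l : V) : Prop :=
  forall e : R[i], 0 < e -> exists N : nat,
    forall n : nat, (N <= n)%N -> hnorm (u n - l) < e.

Definition hcauchy (u : nat -> V) : Prop :=
  forall e : R[i], 0 < e -> exists N : nat,
    forall m n : nat, (N <= m)%N -> (N <= n)%N -> hnorm (u m - u n) < e.

Definition is_hilbert : Prop :=
  [/\ (forall (a : R[i]) (x y z : V), ip (a *: x + y) z = a * ip x z + ip y z),
      (forall x y : V, ip y x = (ip x y)^*),
      (forall x : V, 0 <= ip x x),
      (forall x : V, ip x x = 0 -> x = 0) &
      (forall u : nat -> V, hcauchy u -> exists l : V, hconverges u l)].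

Definition bounded_op (T : V -> V) : Prop :=
  (forall (a : R[i]) (x y : V), T (a *: x + y) = a *: T x + T y) /\
  (exists M : R[i], forall x : V, hnorm (T x) <= M * hnorm x).

Definition is_adjoint (T S : V -> V) : Prop :=
  forall x y : V, ip (T x) y = ip x (S y).

Definition closed_range (T : V -> V) : Prop :=
  forall (u : nat -> V) (y : V),
    (forall n, exists x, u n = T x) -> hconverges u y -> exists x, y = T x.

(* T commutes with T^* T, where Ts = T^* *)
Definition quasinormal (T Ts : V -> V) : Prop :=
  forall x : V, T (Ts (T x)) = Ts (T (T x)).

(* Td is the Moore--Penrose inverse of T (the four Penrose equations) *)
Definition is_MP (T Td : V -> V) : Prop :=
  [/\ bounded_op Td,
      (forall x, T (Td (T x)) = T x),
      (forall x, Td (T (Td x)) = Td x),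
      is_adjoint (Td \o T) (Td \o T) &
      is_adjoint (T \o Td) (T \o Td)].

Definition SD (T Ts : V -> V) : Prop :=
  closed_range T /\
  (forall Td : V -> V, is_MP T Td -> forall x : V, Ts (Td x) = Td (Ts x)).

End Hilbert.

From mathcomp Require Import all_boot all_order all_algebra.
From mathcomp Require Import reals.
From mathcomp.real_closed Require Import complex.
Set Implicit Arguments. Unset Strict Implicit. Unset Printing Implicit Defensive.
Import Order.TTheory GRing.Theory Num.Theory.
Local Open Scope ring_scope.

(* Write P = T T^dagger and Q = T^dagger T; both are self-adjoint, P fixes
   the range of T and Q the range of T^*, so T^* P = T^* and Q T^* = T^*.
   Quasi-normality moves T past T^*T: for all y, w,
     <T T^dagger T^* T y, w> = <y, T^*T T T^dagger w> = <y, T T^* P w>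
                             = <T T^* y, w>,
   i.e. T T^* = T T^dagger T^* T.  At y = T^dagger x, together with
   T^* P = T^*, this gives T T^* T^dagger = T T^dagger T^*; applying
   T^dagger on the left and using Q T^* = T^* and T^dagger P = T^dagger
   yields T^* T^dagger = T^dagger T^*.  The argument is purely algebraic:
   closedness of the range is only needed to make T^dagger meaningful. *)

Section Hilbert.
Variables (R : realType) (V : lmodType R[i]) (ip : V -> V -> R[i]).
Hypothesis hH : is_hilbert ip.

Lemma ip_extl (a b : V) : (forall v, ip a v = ip b v) -> a = b.
Proof.
case: hH => ipDl _ _ ip_eq0 _ eq_ab.
apply/eqP; rewrite -subr_eq0; apply/eqP; apply: ip_eq0.
by rewrite -scaleN1r addrC ipDl eq_ab mulN1r addNr.
Qed.

Lemma ip_extr (a b : V) : (forall v, ip v a = ip v b) -> a = b.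
Proof.
case: hH => _ ipC _ _ _ eq_ab; apply: ip_extl => v.
by rewrite ipC eq_ab -ipC.
Qed.

Lemma adjoint_sym (T S : V -> V) : is_adjoint ip T S -> is_adjoint ip S T.
Proof. by case: hH => _ ipC _ _ _ adjTS x y; rewrite ipC -adjTS -ipC. Qed.

Section MoorePenrose.
Variables (T Ts Td : V -> V).
Hypotheses (adjT : is_adjoint ip T Ts) (mpT : is_MP ip T Td).

Lemma adjoint_T_Td (w : V) : Ts (T (Td w)) = Ts w.
Proof.
case: mpT => _ TTdT _ _ selfadjP; apply: ip_extr => v.
by rewrite -!adjT; have := selfadjP (T v) w; rewrite /= TTdT.
Qed.

Lemma Td_T_adjoint (y : V) : Td (T (Ts y)) = Ts y.
Proof.
case: mpT => _ TTdT _ selfadjQ _; apply: ip_extr => v.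
by rewrite -[LHS]selfadjQ /= -adjT TTdT adjT.
Qed.

Hypothesis qnT : quasinormal T Ts.

Lemma quasinormal_T_adjoint (y : V) : T (Ts y) = T (Td (Ts (T y))).
Proof.
case: mpT => _ _ _ _ selfadjP; apply: ip_extl => w.
have adjTs := adjoint_sym adjT.
rewrite [RHS]selfadjP /= adjT (adjTs (T y)) adjT -qnT -adjTs.
by rewrite adjoint_T_Td.
Qed.

Lemma quasinormal_adjoint_MP (x : V) : Ts (Td x) = Td (Ts x).
Proof.
case: mpT => _ _ TdTTd _ _.
by rewrite -Td_T_adjoint quasinormal_T_adjoint adjoint_T_Td TdTTd.
Qed.

End MoorePenrose.
End Hilbert.

Theorem mainTheorem5 (R : realType) (V : lmodType R[i]) (ip : V -> V -> R[i])
    (hH : is_hilbert ip) (T Ts : V -> V) :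
  bounded_op ip T -> is_adjoint ip T Ts -> quasinormal T Ts ->
  closed_range ip T -> SD ip T Ts.
Proof.
move=> _ adjT qnT closedT; split => // Td mpT x.
exact: (quasinormal_adjoint_MP hH (Td := Td) adjT mpT qnT x).
Qed.
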